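(* Let $\mathcal{A}$ and $\mathcal{B}$ be inequivalent sharp qubit observables given by unit vectors $\vec a,\vec b\in\mathbb{R}^3$ (so $\vec a\neq\pm\vec b$), and let $\theta_{\vec a\vec b}$ be the angle between $\vec a$ and $\vec b$. Then unambiguous discrimination of $\mathcal{A}$ and $\mathcal{B}$ is possible in four shots, with success probability $P_{\rm succ}\ge\sin^2\theta_{\vec a\vec b}$ for every a priori distribution $(\eta,1-\eta)$. That is, there exist a state $\varrho$ on $(\mathbb{C}^2)^{\otimes 4}$ and a partition of $\Omega^4$ ($\Omega=\{\omega_1,\omega_2\}$) into disjoint subsets $R_{\mathcal{A}},R_{\mathcal{B}},R_?$, each invariant under swapping the labels $\omega_1\leftrightarrow\omega_2$ in all four entries, such that $p^{\mathcal{B}}_\varrho(\omega)=0$ for all $\omega\in R_{\mathcal{A}}$, $p^{\mathcal{A}}_\varrho(\omega)=0$ for all $\omega\in R_{\mathcal{B}}$, and $\eta\,p^{\mathcal{A}}_\varrho(R_{\mathcal{A}})+(1-\eta)\,p^{\mathcal{B}}_\varrho(R_{\mathcal{B}})\ge\sin^2\theta_{\vec a\vec b}$ for all $\eta\in[0,1]$ (in particular $p^{\mathcal{A}}_\varrho(R_{\mathcal{A}})>0$ and $p^{\mathcal{B}}_\varrho(R_{\mathcal{B}})>0$).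
   Context: A sharp qubit observable given by a unit vector $\vec a\in\mathbb{R}^3$ has outcome set $\Omega=\{\omega_1,\omega_2\}$ and effects $\mathcal{A}_1=\frac12(I+\vec a\cdot\vec\sigma)$, $\mathcal{A}_2=\frac12(I-\vec a\cdot\vec\sigma)$ on $\mathbb{C}^2$ ($\vec\sigma$ the Pauli matrices); two such observables are equivalent if they coincide up to relabeling outcomes, i.e. $\vec b=\pm\vec a$. For a state $\varrho$ on $(\mathbb{C}^2)^{\otimes 4}$ and $\omega=(\omega_{j_1},\ldots,\omega_{j_4})\in\Omega^4$, $p^{\mathcal{A}}_\varrho(\omega)=\mathrm{tr}[\varrho\,\mathcal{A}_{j_1}\otimes\cdots\otimes\mathcal{A}_{j_4}]$, and $p^{\mathcal{A}}_\varrho(R)=\sum_{\omega\in R}p^{\mathcal{A}}_\varrho(\omega)$. The unknown apparatus (either $\mathcal{A}$ or $\mathcal{B}$, with a priori probabilities $\eta$ and $1-\eta$, outcome labels unknown) is applied to each of the four subsystems; results in $R_{\mathcal{A}}$ (resp. $R_{\mathcal{B}}$) lead to the error-free conclusion $\mathcal{A}$ (resp. $\mathcal{B}$), results in $R_?$ are inconclusive. *)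

From HB Require Import structures.
From mathcomp Require Import all_boot all_order all_algebra.
From mathcomp Require Import complex mxtens.
From mathcomp Require Import reals trigo.
Set Implicit Arguments. Unset Strict Implicit. Unset Printing Implicit Defensive.
Import Order.TTheory GRing.Theory Num.Theory.
Local Open Scope ring_scope.
Local Open Scope complex_scope.

Section Qubit.
Variable R : realType.
Local Notation C := R[i].

Definition dot3 (a b : 'rV[R]_3) : R := \sum_(k < 3) a 0 k * b 0 k.
Definition unit3 (a : 'rV[R]_3) : Prop := dot3 a a = 1.

Definition angle3 (a b : 'rV[R]_3) : R := acos (dot3 a b).

Definition pauliX : 'M[C]_2 := \matrix_(i, j) (if i == j then 0 else 1).
Definition pauliY : 'M[C]_2 :=
  \matrix_(i, j) (if i == j then 0 else if i == 0 then - 'i else 'i).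
Definition pauliZ : 'M[C]_2 :=
  \matrix_(i, j) (if i == j then (if i == 0 then 1 else -1) else 0).
Definition dot_sigma (a : 'rV[R]_3) : 'M[C]_2 :=
  ((a 0 0)%:C *: pauliX + (a 0 1)%:C *: pauliY + (a 0 2%:R)%:C *: pauliZ).

(* the outcome set Omega = {omega_1, omega_2} is 'I_2 (ord0 = omega_1) *)
Definition effect (a : 'rV[R]_3) (j : 'I_2) : 'M[C]_2 :=
  2%:R^-1 *: (1%:M + (if j == 0 then 1 else -1) *: dot_sigma a).

Definition dim4 : nat := (2 * (2 * (2 * 2)))%N.
Definition outcome4 := {ffun 'I_4 -> 'I_2}.

Definition effect4 (a : 'rV[R]_3) (w : outcome4) : 'M[C]_dim4 :=
  tensmx (effect a (w 0)) (tensmx (effect a (w 1))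
    (tensmx (effect a (w 2%:R)) (effect a (w 3%:R)))).

Definition adjmx {m n : nat} (M : 'M[C]_(m, n)) : 'M[C]_(n, m) :=
  map_mx (fun z : C => z^*) M^T.
Definition psd {n : nat} (rho : 'M[C]_n) : Prop :=
  forall v : 'cV[C]_n, 0 <= (adjmx v *m rho *m v) 0 0.
Definition density4 (rho : 'M[C]_dim4) : Prop := psd rho /\ \tr rho = 1.

Definition prob (a : 'rV[R]_3) (rho : 'M[C]_dim4) (w : outcome4) : C :=
  \tr (rho *m effect4 a w).
Definition probset (a : 'rV[R]_3) (rho : 'M[C]_dim4) (S : {set outcome4}) : C :=
  \sum_(w in S) prob a rho w.

Definition swap4 (w : outcome4) : outcome4 := [ffun k => rev_ord (w k)].
Definition swap_invariant (S : {set outcome4}) : Prop :=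
  forall w, w \in S -> swap4 w \in S.

End Qubit.

(* The state is a product of two entangled two-qubit states.  For unit vectors u, v and
   the component w of u orthogonal to v, the pure state [pair_state w] gives perfectly
   correlated outcomes when both of its qubits are measured along v, and different
   outcomes with probability |w|^2 = sin^2 theta when both are measured along u.  Taking
   w = b - (a.b) a on qubits 1-2 and w = a - (a.b) b on qubits 3-4, the outcomes "equal on
   1-2, different on 3-4" are impossible for B and reveal A, the mirror outcomes reveal B,
   and under the respective observable each event has probability sin^2 theta. *)
From HB Require Import structures.
From mathcomp Require Import all_boot all_order all_algebra.
From mathcomp Require Import complex mxtens.
From mathcomp Require Import reals trigo.
From mathcomp Require Import ring lra.
Import Order.TTheory GRing.Theory Num.Theory.
Set Implicit Arguments.
Unset Strict Implicit.
Unset Printing Implicit Defensive.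
Local Open Scope ring_scope.
Local Open Scope complex_scope.

Local Notation Re := complex.Re.
Local Notation Im := complex.Im.

Section RealParts.
Variable R : realType.
Local Notation C := R[i].

Definition reim (x : C) : R * R := (Re x, Im x).
Definition pmul (p q : R * R) : R * R :=
  (p.1 * q.1 - p.2 * q.2, p.1 * q.2 + p.2 * q.1).
Definition pconj (p : R * R) : R * R := (p.1, - p.2).

Lemma ReD (x y : C) : Re (x + y) = Re x + Re y. Proof. by case: x; case: y. Qed.
Lemma ImD (x y : C) : Im (x + y) = Im x + Im y. Proof. by case: x; case: y. Qed.

Lemma reim_mulJ (x y z u : C) :
  reim (x * y^*%C * z * u) = pmul (pmul (pmul (reim x) (pconj (reim y))) (reim z)) (reim u).
Proof.
case: x => ? ?; case: y => ? ?; case: z => ? ?; case: u => ? ?.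
by rewrite /reim /pconj /pmul; simpc => /=; congr (_, _); ring.
Qed.

Lemma complex_realE (x : C) r : Re x = r -> Im x = 0 -> x = r%:C.
Proof. by case: x => a b /= -> ->. Qed.

End RealParts.

Section PairExpectation.
Variable R : realType.
Local Notation C := R[i].

Definition sgn2 (j : 'I_2) : R := if j == 0 then 1 else -1.

Lemma sgn2M (x y : 'I_2) : sgn2 x * sgn2 y = if x == y then 1 else -1.
Proof. by rewrite /sgn2; case: x => [[|[|//]] ?]; case: y => [[|[|//]] ?] /=; ring. Qed.

Lemma dot3E (u v : 'rV[R]_3) :
  dot3 u v = u 0 0 * v 0 0 + u 0 1 * v 0 1 + u 0 2%:R * v 0 2%:R.
Proof.
have e1 : (lift ord0 ord0 : 'I_3) = 1 by apply: val_inj.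
have e2 : (lift ord0 (lift ord0 ord0) : 'I_3) = 2%:R by apply: val_inj.
by rewrite /dot3 !big_ord_recl big_ord0 addr0 addrA e1 e2.
Qed.

Lemma reim_effect (n : 'rV[R]_3) x (i j : 'I_2) : reim (effect n x i j) =
  (2^-1 * ((i == j)%:R + sgn2 x *
            (if i == j then (if i == 0 then n 0 2%:R else - n 0 2%:R) else n 0 0)),
   2^-1 * sgn2 x * (if i == j then 0 else if i == 0 then - n 0 1 else n 0 1)).
Proof.
rewrite /reim /effect /dot_sigma /pauliX /pauliY /pauliZ !mxE.
have -> : (2%:R^-1 : C) = (2^-1)%:C by rewrite fmorphV rmorph_nat.
rewrite /sgn2; case: x => [[|[|//]] ?]; case: i => [[|[|//]] ?]; case: j => [[|[|//]] ?] /=;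
  by simpc; congr (_, _); ring.
Qed.

(* Amplitude matrix of the two-qubit vector [w1 I + i (w0 Z - w2 X)] applied to the
   unnormalized maximally entangled vector |00> + |11>. *)
Definition pair_state (w : 'rV[R]_3) : 'M[C]_2 := \matrix_(i, j)
  (if i == j then (if i == 0 then Complex (w 0 1) (w 0 0) else Complex (w 0 1) (- w 0 0))
   else Complex 0 (- w 0 2%:R)).

Lemma reim_pair_state w (i j : 'I_2) : reim (pair_state w i j) =
  (if i == j then w 0 1 else 0,
   if i == j then (if i == 0 then w 0 0 else - w 0 0) else - w 0 2%:R).
Proof. by rewrite /reim mxE; case: (i == j); case: (i == 0). Qed.

(* <psi| E (x) F |psi> for the two-qubit vector psi with amplitudes psi_(i0 i1) = M i0 i1. *)
Definition pair_expect (M E F : 'M[C]_2) : C :=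
  \sum_(i0 < 2) \sum_(i1 < 2) \sum_(j0 < 2) \sum_(j1 < 2)
    M i0 i1 * (M j0 j1)^*%C * E j0 i0 * F j1 i1.

Let pair_expect_term (M E F : 'M[C]_2) (i0 i1 j0 j1 : 'I_2) : R * R :=
  pmul (pmul (pmul (reim (M i0 i1)) (pconj (reim (M j0 j1)))) (reim (E j0 i0)))
       (reim (F j1 i1)).

Lemma reim_pair_expect M E F : reim (pair_expect M E F) =
  (\sum_(i0 < 2) \sum_(i1 < 2) \sum_(j0 < 2) \sum_(j1 < 2)
      (pair_expect_term M E F i0 i1 j0 j1).1,
   \sum_(i0 < 2) \sum_(i1 < 2) \sum_(j0 < 2) \sum_(j1 < 2)
      (pair_expect_term M E F i0 i1 j0 j1).2).
Proof.
have sum4 (f : C -> R) : {morph f : x y / x + y} -> f 0 = 0 ->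
    f (pair_expect M E F) = \sum_(i0 < 2) \sum_(i1 < 2) \sum_(j0 < 2) \sum_(j1 < 2)
      f (M i0 i1 * (M j0 j1)^*%C * E j0 i0 * F j1 i1).
  by move=> fD f0; rewrite /pair_expect; do 4 (rewrite (big_morph f fD f0); apply: eq_bigr => ? _).
rewrite /reim (sum4 _ (@ReD R)) // (sum4 _ (@ImD R)) //.
congr (_, _); do 4 (apply: eq_bigr => ? _).
  exact: (congr1 fst (reim_mulJ _ _ _ _)).
exact: (congr1 snd (reim_mulJ _ _ _ _)).
Qed.

Local Notation l1 := (lift ord0 ord0 : 'I_2).
Lemma ord2_eqE : ((ord0 == ord0 :> 'I_2) = true) * ((ord0 == l1) = false) *
  ((l1 == ord0) = false) * ((l1 == l1) = true).
Proof. by []. Qed.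

Lemma pair_expect_effect w n x y :
  pair_expect (pair_state w) (effect n x) (effect n y) =
  (2^-1 * (dot3 w w - sgn2 x * sgn2 y * (2 * dot3 w n ^+ 2 - dot3 w w * dot3 n n)))%:C.
Proof.
have := reim_pair_expect (pair_state w) (effect n x) (effect n y).
move: (reim_pair_state w) (reim_effect n x) (reim_effect n y).
generalize (pair_state w) (effect n x) (effect n y) => M E F hM hE hF.
rewrite /pair_expect_term !big_ord_recl !big_ord0 /pconj !hM !hE !hF !ord2_eqE /pmul /reim /=.
case=> ReP ImP; apply: complex_realE; rewrite ?ReP ?ImP ?dot3E; first by field.
ring.
Qed.

Lemma pair_expect1 w : pair_expect (pair_state w) 1%:M 1%:M = (2 * dot3 w w)%:C.
Proof.
have h1 (i j : 'I_2) : reim ((1%:M : 'M[C]_2) i j) = ((i == j)%:R, 0).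
  by rewrite /reim mxE; case: (i == j).
have := reim_pair_expect (pair_state w) 1%:M 1%:M.
move: (reim_pair_state w) h1; generalize (pair_state w) (1%:M : 'M[C]_2) => M E hM hE.
rewrite /pair_expect_term !big_ord_recl !big_ord0 /pconj !hM !hE !ord2_eqE /pmul /reim /=.
case=> ReP ImP; apply: complex_realE; rewrite ?ReP ?ImP ?dot3E; ring.
Qed.

End PairExpectation.

Section ProductState.
Variable R : realType.
Local Notation C := R[i].

Lemma exchange_big22 (F : 'I_2 -> 'I_2 -> 'I_2 -> 'I_2 -> C) :
  \sum_(a < 2) \sum_(b < 2) \sum_(c < 2) \sum_(d < 2) F a b c d =
  \sum_(c < 2) \sum_(d < 2) \sum_(a < 2) \sum_(b < 2) F a b c d.
Proof.
under eq_bigr => a _ do under eq_bigr => b _ do rewrite pair_big.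
under [RHS]eq_bigr => c _ do under eq_bigr => d _ do rewrite pair_big.
by rewrite [LHS]pair_big [RHS]pair_big /= exchange_big.
Qed.

Lemma big4_mul (f g : 'I_2 -> 'I_2 -> 'I_2 -> 'I_2 -> C) :
  \sum_(i0 < 2) \sum_(i1 < 2) \sum_(i2 < 2) \sum_(i3 < 2)
  \sum_(j0 < 2) \sum_(j1 < 2) \sum_(j2 < 2) \sum_(j3 < 2) f i0 i1 j0 j1 * g i2 i3 j2 j3 =
  (\sum_(i0 < 2) \sum_(i1 < 2) \sum_(j0 < 2) \sum_(j1 < 2) f i0 i1 j0 j1) *
  (\sum_(i2 < 2) \sum_(i3 < 2) \sum_(j2 < 2) \sum_(j3 < 2) g i2 i3 j2 j3).
Proof.
under eq_bigr => i0 _ do under eq_bigr => i1 _ do rewrite (exchange_big22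
  (fun i2 i3 j0 j1 => \sum_(j2 < 2) \sum_(j3 < 2) f i0 i1 j0 j1 * g i2 i3 j2 j3)).
do 4 (rewrite mulr_suml; apply: eq_bigr => ? _).
by do 3 (rewrite mulr_sumr; apply: eq_bigr => ? _); rewrite mulr_sumr.
Qed.

Lemma sum_mxtens_index m n (F : 'I_(m * n) -> C) :
  \sum_(k < m * n) F k = \sum_(i < m) \sum_(j < n) F (mxtens_index (i, j)).
Proof.
rewrite pair_big /= (reindex (@mxtens_index m n)) /=; first by apply: eq_bigr => -[].
by exists (@mxtens_unindex m n) => k _; rewrite (mxtens_indexK, mxtens_unindexK).
Qed.

Definition idx4 (i0 i1 i2 i3 : 'I_2) : 'I_dim4 :=
  mxtens_index (i0, mxtens_index (i1, @mxtens_index 2 2 (i2, i3))).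

Lemma sum_dim4 (F : 'I_dim4 -> C) : \sum_(k < dim4) F k =
  \sum_(i0 < 2) \sum_(i1 < 2) \sum_(i2 < 2) \sum_(i3 < 2) F (idx4 i0 i1 i2 i3).
Proof.
rewrite sum_mxtens_index; apply: eq_bigr => i0 _.
by rewrite sum_mxtens_index; apply: eq_bigr => i1 _; rewrite sum_mxtens_index.
Qed.

(* The four-qubit vector psi1 (x) psi2, where psi_k has amplitude matrix M_k. *)
Definition prod_state (M1 M2 : 'M[C]_2) (k : 'I_dim4) : C :=
  let p := @mxtens_unindex 2 (2 * (2 * 2)) k in
  let q := @mxtens_unindex 2 (2 * 2) p.2 in
  let r := @mxtens_unindex 2 2 q.2 in
  M1 p.1 q.1 * M2 r.1 r.2.

Lemma prod_stateE M1 M2 i0 i1 i2 i3 :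
  prod_state M1 M2 (idx4 i0 i1 i2 i3) = M1 i0 i1 * M2 i2 i3.
Proof. by rewrite /prod_state /idx4 !mxtens_indexK. Qed.

Definition prod_proj (lam : C) (M1 M2 : 'M[C]_2) : 'M[C]_dim4 :=
  \matrix_(k, l) (lam * prod_state M1 M2 k * (prod_state M1 M2 l)^*%C).

Lemma tr_prod_proj lam M1 M2 (E0 E1 E2 E3 : 'M[C]_2) :
  \tr (prod_proj lam M1 M2 *m (E0 *t (E1 *t (E2 *t E3)))) =
  lam * pair_expect M1 E0 E1 * pair_expect M2 E2 E3.
Proof.
rewrite /mxtrace; under eq_bigr => k _ do rewrite mxE.
rewrite sum_dim4; under eq_bigr => i0 _ do under eq_bigr => i1 _ do
  under eq_bigr => i2 _ do under eq_bigr => i3 _ do rewrite sum_dim4.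
rewrite /pair_expect -mulrA -big4_mul mulr_sumr.
do 8 (apply: eq_bigr => ? _; rewrite ?mulr_sumr).
by rewrite !mxE !prod_stateE /idx4 !mxtens_indexK /= rmorphM; ring.
Qed.

Lemma prod_proj_psd (r : R) M1 M2 : 0 <= r -> psd (prod_proj r%:C M1 M2).
Proof.
move=> r_ge0 v; set z := \sum_(k < dim4) (v k 0)^*%C * prod_state M1 M2 k.
have zJ : z^* = \sum_(l < dim4) v l 0 * (prod_state M1 M2 l)^*%C.
  by rewrite rmorph_sum; apply: eq_bigr => l _; rewrite rmorphM /= conjcK.
have -> : (adjmx v *m prod_proj r%:C M1 M2 *m v) 0 0 = r%:C * (z * z^*%C).
  rewrite mxE; under eq_bigr => l _ do rewrite mxE mulr_suml.
  rewrite exchange_big zJ /z mulr_suml mulr_sumr; apply: eq_bigr => k _.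
  rewrite !mulr_sumr; apply: eq_bigr => l _.
  by rewrite /adjmx /prod_proj !mxE; ring.
by rewrite mulr_ge0 ?ler0c ?mulcJ_ge0.
Qed.

Lemma tensmx11 m n : (1%:M : 'M[C]_m) *t (1%:M : 'M[C]_n) = 1%:M.
Proof.
apply/matrixP => k l.
case: (@mxtens_indexP m n k) => i1 i2; case: (@mxtens_indexP m n l) => j1 j2.
rewrite tensmxE !mxE (inj_eq (can_inj (@mxtens_indexK m n))) xpair_eqE.
by case: eqP; case: eqP; rewrite ?mulr1 ?mulr0 ?mul0r.
Qed.

Lemma tr_prod_proj1 lam M1 M2 :
  \tr (prod_proj lam M1 M2) = lam * pair_expect M1 1%:M 1%:M * pair_expect M2 1%:M 1%:M.
Proof. by rewrite -tr_prod_proj !tensmx11 mulmx1. Qed.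

End ProductState.

Lemma density4_prod_proj (R : realType) (M1 M2 : 'M[R[i]]_2) (p1 p2 : R) :
  pair_expect M1 1%:M 1%:M = p1%:C -> pair_expect M2 1%:M 1%:M = p2%:C ->
  0 < p1 -> 0 < p2 -> density4 (prod_proj (p1 * p2)^-1%:C M1 M2).
Proof.
move=> h1 h2 p1_gt0 p2_gt0; split; first by apply: prod_proj_psd; rewrite invr_ge0 mulr_ge0 ?ltW.
by rewrite tr_prod_proj1 h1 h2 -!rmorphM -mulrA mulVf ?rmorph1 // mulf_neq0 ?lt0r_neq0.
Qed.

Definition mk4 (x0 x1 x2 x3 : 'I_2) : outcome4 := [ffun k : 'I_4 =>
  if k == 0 then x0 else if k == 1 then x1 else if k == 2%:R then x2 else x3].

Lemma mk4E0 x0 x1 x2 x3 : mk4 x0 x1 x2 x3 0 = x0. Proof. by rewrite ffunE. Qed.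
Lemma mk4E1 x0 x1 x2 x3 : mk4 x0 x1 x2 x3 1 = x1. Proof. by rewrite ffunE. Qed.
Lemma mk4E2 x0 x1 x2 x3 : mk4 x0 x1 x2 x3 2%:R = x2. Proof. by rewrite ffunE. Qed.
Lemma mk4E3 x0 x1 x2 x3 : mk4 x0 x1 x2 x3 3%:R = x3. Proof. by rewrite ffunE. Qed.
Definition mk4E := (mk4E0, mk4E1, mk4E2, mk4E3).

Lemma mk4K (w : outcome4) : mk4 (w 0) (w 1) (w 2%:R) (w 3%:R) = w.
Proof.
apply/ffunP => k; have [->|->|->|->] : [\/ k = 0, k = 1, k = 2%:R | k = 3%:R].
  by case: k => [[|[|[|[|//]]]] ?]; [apply: Or41 | apply: Or42 | apply: Or43 | apply: Or44];
    apply: val_inj.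
all: by rewrite mk4E.
Qed.

Lemma big_outcome4 (V : Type) (idx : V) (op : Monoid.com_law idx) (F : outcome4 -> V) :
  \big[op/idx]_w F w = \big[op/idx]_(x0 < 2) \big[op/idx]_(x1 < 2)
    \big[op/idx]_(x2 < 2) \big[op/idx]_(x3 < 2) F (mk4 x0 x1 x2 x3).
Proof.
rewrite [RHS]pair_big [RHS]pair_big [RHS]pair_big /=.
rewrite (reindex (fun p : 'I_2 * 'I_2 * 'I_2 * 'I_2 => mk4 p.1.1.1 p.1.1.2 p.1.2 p.2)) //=.
exists (fun w : outcome4 => (w 0, w 1, w 2%:R, w 3%:R)) => [[[[? ?] ?] ?] _ | w _].
  by rewrite /= !mk4E.
by rewrite mk4K.
Qed.

Definition pair_pattern (e1 e2 : bool) : {set outcome4} :=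
  [set w : outcome4 | ((w 0 == w 1) == e1) && ((w 2%:R == w 3%:R) == e2)].

Lemma card_pair_pattern e1 e2 : #|pair_pattern e1 e2| = 4.
Proof.
rewrite -sum1_card big_mkcond big_outcome4 !big_ord_recl !big_ord0 !inE !mk4E !ord2_eqE.
by case: e1; case: e2.
Qed.

Lemma swap4_eq (w : outcome4) k l : (swap4 w k == swap4 w l) = (w k == w l).
Proof. by rewrite !ffunE (inj_eq rev_ord_inj). Qed.

Lemma swap_invariant_pair_pattern e1 e2 : swap_invariant (pair_pattern e1 e2).
Proof. by move=> w; rewrite !inE !swap4_eq. Qed.

Lemma disjoint_pair_pattern e1 e2 e2' :
  [disjoint pair_pattern e1 e2 & pair_pattern (~~ e1) e2'].
Proof.
rewrite -setI_eq0; apply/eqP/setP => w; rewrite !inE.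
by case: (w 0 == w 1); case: e1; rewrite /= ?andbF.
Qed.

Lemma partition3 (T : finType) (A B : {set T}) : [disjoint A & B] ->
  [/\ [disjoint A & B], [disjoint A & ~: (A :|: B)], [disjoint B & ~: (A :|: B)]
    & A :|: B :|: ~: (A :|: B) = [set: T]].
Proof.
move=> dAB; split; rewrite ?setUCr // disjoints_subset setCK; [exact: subsetUl | exact: subsetUr].
Qed.

Section PatternProbability.
Variable R : realType.
Variables (n : 'rV[R]_3) (lam : R) (M1 M2 : 'M[R[i]]_2) (f1 f2 : bool -> R).
Hypothesis expect1 : forall x y, pair_expect M1 (effect n x) (effect n y) = (f1 (x == y))%:C.
Hypothesis expect2 : forall x y, pair_expect M2 (effect n x) (effect n y) = (f2 (x == y))%:C.

Lemma prob_pair_pattern e1 e2 w : w \in pair_pattern e1 e2 ->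
  prob n (prod_proj lam%:C M1 M2) w = (lam * f1 e1 * f2 e2)%:C.
Proof.
rewrite inE => /andP[/eqP <- /eqP <-].
by rewrite /prob /effect4 tr_prod_proj expect1 expect2 -!rmorphM.
Qed.

Lemma probset_pair_pattern e1 e2 :
  probset n (prod_proj lam%:C M1 M2) (pair_pattern e1 e2) = (4 * (lam * f1 e1 * f2 e2))%:C.
Proof.
rewrite /probset; under eq_bigr => w /prob_pair_pattern -> do [].
by rewrite sumr_const card_pair_pattern -rmorphMn mulr_natl.
Qed.

End PatternProbability.

Section Geometry.
Variable R : realType.

Definition agree_weight (t : R) (e : bool) : R := if e then t else 0.
Definition across_weight (t : R) (e : bool) : R := if e then t - t ^+ 2 else t ^+ 2.

Implicit Types u v w : 'rV[R]_3.

Lemma dot3C u v : dot3 u v = dot3 v u.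
Proof. by rewrite !dot3E; ring. Qed.

Lemma dot3Bl u v w k : dot3 (u - k *: v) w = dot3 u w - k * dot3 v w.
Proof. by rewrite !dot3E !mxE; ring. Qed.

Lemma dot3Br u v w k : dot3 w (u - k *: v) = dot3 w u - k * dot3 w v.
Proof. by rewrite !dot3E !mxE; ring. Qed.

Lemma dot3_ge0 u : 0 <= dot3 u u.
Proof. by apply: sumr_ge0 => k _; rewrite -expr2 sqr_ge0. Qed.

Lemma dot3_eq0 u : dot3 u u = 0 -> u = 0.
Proof.
move/psumr_eq0P => u0; apply/matrixP => i j; rewrite (ord1 i) mxE.
by apply/eqP; rewrite -sqrf_eq0 expr2 u0 // => k _; rewrite -expr2 sqr_ge0.
Qed.

Definition reject u v := u - dot3 u v *: v.

Section UnitVectors.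
Variables u v : 'rV[R]_3.
Hypotheses (uu : unit3 u) (uv : unit3 v).

Lemma dot3_reject_orth : dot3 (reject u v) v = 0.
Proof. by rewrite dot3Bl uv mulr1 subrr. Qed.

Lemma dot3_reject_self : dot3 (reject u v) u = 1 - dot3 u v ^+ 2.
Proof. by rewrite dot3Bl uu (dot3C v) expr2. Qed.

Lemma dot3_reject_reject : dot3 (reject u v) (reject u v) = 1 - dot3 u v ^+ 2.
Proof. by rewrite dot3Br dot3_reject_self dot3_reject_orth mulr0 subr0. Qed.

Lemma dot3_sqr_le1 : dot3 u v ^+ 2 <= 1.
Proof. by rewrite -subr_ge0 -dot3_reject_reject dot3_ge0. Qed.

Lemma dot3_sqr_lt1 : u != v -> u != - v -> dot3 u v ^+ 2 < 1.
Proof.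
move=> nuv nuNv; rewrite lt_neqAle dot3_sqr_le1 andbT; apply: contraNneq nuv => /eqP c2.
have /dot3_eq0/eqP : dot3 (reject u v) (reject u v) = 0.
  by rewrite dot3_reject_reject (eqP c2) subrr.
rewrite subr_eq0 => /eqP uE; move: c2 nuNv; rewrite sqrf_eq1 => /orP[] /eqP c; rewrite uE c.
  by rewrite scale1r.
by rewrite scaleN1r eqxx.
Qed.

Lemma sin_angle3_sqr : sin (angle3 u v) ^+ 2 = 1 - dot3 u v ^+ 2.
Proof.
have c2 := dot3_sqr_le1.
have c_bound : -1 <= dot3 u v <= 1 by apply/andP; split; nra.
by rewrite /angle3 sin2cos2 acosK // in_itv.
Qed.

Lemma pair_expect_reject_along x y :
  pair_expect (pair_state (reject u v)) (effect v x) (effect v y) =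
  (agree_weight (1 - dot3 u v ^+ 2) (x == y))%:C.
Proof.
rewrite pair_expect_effect dot3_reject_reject dot3_reject_orth uv sgn2M /agree_weight.
by case: eqP => _; congr _%:C; field.
Qed.

Lemma pair_expect_reject_across x y :
  pair_expect (pair_state (reject u v)) (effect u x) (effect u y) =
  (across_weight (1 - dot3 u v ^+ 2) (x == y))%:C.
Proof.
rewrite pair_expect_effect dot3_reject_reject dot3_reject_self uu sgn2M.
by rewrite /across_weight; case: eqP => _; congr _%:C; field.
Qed.

Lemma pair_expect1_reject :
  pair_expect (pair_state (reject u v)) 1%:M 1%:M = (2 * (1 - dot3 u v ^+ 2))%:C.
Proof. by rewrite pair_expect1 dot3_reject_reject. Qed.

End UnitVectors.
End Geometry.

Theorem proposition6 (R : realType) (a b : 'rV[R]_3) :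
  unit3 a -> unit3 b -> a != b -> a != - b ->
  exists (rho : 'M[R[i]]_dim4) (RA RB RQ : {set outcome4}),
    [/\ density4 rho,
        [/\ [disjoint RA & RB], [disjoint RA & RQ], [disjoint RB & RQ]
          & RA :|: RB :|: RQ = [set: outcome4]],
        [/\ swap_invariant RA, swap_invariant RB & swap_invariant RQ],
        (forall w, w \in RA -> prob b rho w = 0) /\
        (forall w, w \in RB -> prob a rho w = 0) &
        (forall eta : R, 0 <= eta <= 1 ->
           (eta%:C * probset a rho RA + (1 - eta)%:C * probset b rho RB)
             >= ((sin (angle3 a b)) ^+ 2)%:C)].
Proof.
move=> ua ub nab naNb.
have t_gt0 : 0 < 1 - dot3 a b ^+ 2 by rewrite subr_gt0 dot3_sqr_lt1.
have [A1 A2] := (pair_expect_reject_along ub ua, pair_expect_reject_across ua ub).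
have [B1 B2] := (pair_expect_reject_across ub ua, pair_expect_reject_along ua ub).
pose r := (2 * (1 - dot3 b a ^+ 2) * (2 * (1 - dot3 a b ^+ 2)))^-1.
exists (prod_proj r%:C (pair_state (reject b a)) (pair_state (reject a b))),
  (pair_pattern true false), (pair_pattern false true),
  (~: (pair_pattern true false :|: pair_pattern false true)).
split.
- apply: density4_prod_proj (pair_expect1_reject ub ua) (pair_expect1_reject ua ub) _ _;
    by rewrite mulr_gt0 // dot3C.
- exact/partition3/disjoint_pair_pattern.
- split; try exact: swap_invariant_pair_pattern.
  by move=> w; rewrite !inE !swap4_eq.
- split=> w w_in.
    by rewrite (prob_pair_pattern r B1 B2 w_in) /agree_weight /= mulr0.
  by rewrite (prob_pair_pattern r A1 A2 w_in) /agree_weight /= mulr0 mul0r.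
- move=> eta _; rewrite (probset_pair_pattern r A1 A2) (probset_pair_pattern r B1 B2).
  rewrite sin_angle3_sqr // -!rmorphM -rmorphD lecR /r /agree_weight /across_weight /=.
  rewrite (dot3C b); set t := 1 - dot3 a b ^+ 2 in t_gt0 *.
  rewrite [X in _ <= X](_ : _ = t) //; field; exact: lt0r_neq0.
Qed.
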